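(* Let $F$ be a graph. (i) If every edge of $F$ lies in a cycle of $F$ of length at most $m+1$, then $\mathrm{rsat}(n,F)=\Omega(n^{1+1/m})$. (ii) If for every edge $e$ of $F$ the graph $F\setminus e$ has diameter at most $r$, then $\mathrm{rsat}(n,F)=\Omega(n^{1+1/r})$. (iii) If $F$ is connected, then there exists a constant $c=c_F$ such that $\liminf_{n\to\infty}\mathrm{rsat}(n,F)/n\le c$ if and only if $F$ contains a cut edge.
   Context: All graphs are finite and simple. For a graph $F$, a graph $G$ is $F$-saturated if $G$ contains no copy of $F$, but adding any edge between two non-adjacent vertices of $G$ creates a copy of $F$. A graph is regular if all vertices have the same degree. $\mathrm{rsat}(n,F)$ denotes the smallest number of edges of a regular $n$-vertex $F$-saturated graph, defined only for those $n$ for which such a graph exists; the asymptotic statements ($\Omega$, $\liminf$) are over those $n$ for which $\mathrm{rsat}(n,F)$ is defined. For an edge $e$ of $F$, $F\setminus e$ is the graph on the vertex set of $F$ with edge set $E(F)\setminus\{e\}$. A cut edge is an edge whose removal increases the number of connected components. *)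

From Stdlib Require Import Reals.
From mathcomp Require Import all_boot.

Set Implicit Arguments.
Unset Strict Implicit.
Unset Printing Implicit Defensive.

(* A (simple) graph on a finite vertex type T is given by its edge set,
   a set of 2-element subsets of T. *)
Definition is_sgraph (T : finType) (E : {set {set T}}) : Prop :=
  forall e, e \in E -> #|e| = 2.

Definition adj (T : finType) (E : {set {set T}}) : rel T :=
  fun x y => (x != y) && ([set x; y] \in E).

Definition deg (T : finType) (E : {set {set T}}) (x : T) : nat :=
  #|[set y | adj E x y]|.

Definition regular (T : finType) (E : {set {set T}}) : Prop :=
  forall x y : T, deg E x = deg E y.

Definition has_copy (V W : finType) (F : {set {set V}}) (G : {set {set W}}) : Prop :=
  exists f : V -> W, injective f /\ forall x y, adj F x y -> adj G (f x) (f y).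

Definition saturated (V W : finType) (F : {set {set V}}) (G : {set {set W}}) : Prop :=
  [/\ is_sgraph G, ~ has_copy F G &
      forall x y : W, x != y -> ~~ adj G x y ->
        has_copy F (G :|: [set [set x; y]])].

Definition is_rsat (V : finType) (F : {set {set V}}) (n k : nat) : Prop :=
  (exists G : {set {set 'I_n}}, [/\ regular G, saturated F G & #|G| = k]) /\
  (forall G : {set {set 'I_n}}, regular G -> saturated F G -> k <= #|G|).

(* rsat(n,F) = Omega(g n), over those n for which rsat(n,F) is defined. *)
Definition rsat_Omega (V : finType) (F : {set {set V}}) (g : nat -> R) : Prop :=
  exists c : R, Rlt 0 c /\ exists N : nat,
    forall n k, N <= n -> is_rsat F n k -> Rle (Rmult c (g n)) (INR k).

(* liminf_{n -> oo} rsat(n,F)/n <= c, over those n for which rsat is defined. *)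
Definition rsat_liminf_le (V : finType) (F : {set {set V}}) (c : R) : Prop :=
  forall eps : R, Rlt 0 eps -> forall N : nat,
    exists n k, [/\ N <= n, is_rsat F n k & Rlt (Rdiv (INR k) (INR n)) (Rplus c eps)].

Definition edge_in_short_cycle (V : finType) (F : {set {set V}}) (e : {set V})
  (L : nat) : Prop :=
  exists c : seq V, [/\ uniq c, cycle (adj F) c, 3 <= size c, size c <= L &
                      exists2 x, x \in c & e = [set x; next c x]].

Definition dist_le (T : finType) (G : {set {set T}}) (x y : T) (r : nat) : Prop :=
  exists p : seq T, [/\ path (adj G) x p, last x p = y & size p <= r].

Definition diam_le (T : finType) (G : {set {set T}}) (r : nat) : Prop :=
  forall x y : T, dist_le G x y r.

Definition connected (T : finType) (G : {set {set T}}) : Prop :=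
  forall x y : T, connect (adj G) x y.

Definition ncomp (T : finType) (G : {set {set T}}) : nat :=
  n_comp (adj G) (predT : {pred T}).

Definition cut_edge (T : finType) (G : {set {set T}}) (e : {set T}) : Prop :=
  e \in G /\ ncomp G < ncomp (G :\ e).

(* If every edge ab of F can be bypassed by a path of length at most r in
   F - ab, then in an F-saturated graph G any two vertices x, y are at distance
   at most r: a copy of F in G + xy must send some edge ab to xy, and the image
   of the bypass joins x to y inside G.  By the Moore bound a d-regular graph
   of diameter at most r has at most (d+1)^r vertices, so d >= n^(1/r) - 1 and
   G has at least nd/2 edges.  Short cycles (i), small diameter of F - e (ii)
   and, for connected F, the absence of cut edges (iii, with r = |V|) all
   provide such bypasses.  Conversely, if F is connected with a cut edge ab and
   |V| = s + 1, a disjoint union of copies of K_s is F-saturated: F does not fit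
   into one clique, but once two cliques are joined by an edge xy, the two sides
   of ab in F - ab can be mapped into the two cliques with ab sent to xy. *)

From Stdlib Require Import Reals Lra Classical Wf_nat.
From mathcomp Require Import all_boot perm.

Set Implicit Arguments.
Unset Strict Implicit.
Unset Printing Implicit Defensive.

Lemma eq_set2_cases (T : finType) (a b c d : T) : [set a; b] = [set c; d] ->
  (a = c /\ b = d) \/ (a = d /\ b = c).
Proof.
move=> E.
have : a \in [set c; d] by rewrite -E set21.
have : b \in [set c; d] by rewrite -E set22.
have : c \in [set a; b] by rewrite E set21.
have : d \in [set a; b] by rewrite E set22.
by rewrite !inE; do 4! (case/orP => /eqP ?); subst; auto.
Qed.

Lemma card_rel_pairs (T : finType) (P : pred T) (R : rel T) :
  #|[set p : T * T | P p.1 && R p.1 p.2]| = \sum_(x | P x) #|[set y | R x y]|.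
Proof.
rewrite -sum1_card (eq_bigr (fun x => \sum_(y | R x y) 1)) => [|x _].
  by rewrite pair_big_dep; apply: eq_bigl => p; rewrite inE.
by rewrite -sum1_card; apply: eq_bigl => y; rewrite inE.
Qed.

Section Graphs.
Variable T : finType.
Implicit Types (G : {set {set T}}) (x y : T).

Lemma adjC G x y : adj G x y = adj G y x.
Proof. by rewrite /adj eq_sym setUC. Qed.

Lemma adj_neq G x y : adj G x y -> x != y.
Proof. by case/andP. Qed.

Lemma adjU G E x y : adj G x y -> adj (G :|: E) x y.
Proof. by rewrite /adj in_setU => /andP [-> ->]. Qed.

Lemma adjD1 G e x y : adj (G :\ e) x y = ([set x; y] != e) && adj G x y.
Proof. by rewrite /adj in_setD1 andbCA. Qed.

Lemma sum_deg_le G : \sum_x deg G x <= 2 * #|G|.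
Proof.
rewrite -(card_rel_pairs predT (adj G)).
(* An ordered pair of adjacent vertices is determined by its edge and orientation. *)
pose code (p : T * T) := ([set p.1; p.2], enum_rank p.1 < enum_rank p.2).
rewrite -(card_in_imset (f := code)) => [|[x y] [x' y']]; last first.
  rewrite !inE /= => /adj_neq xy /adj_neq x'y' [/eq_set2_cases [[-> ->] | [-> ->]] //].
  case: ltngtP => // /val_inj/enum_rank_inj eqyx.
  by rewrite eqyx eqxx in x'y'.
rewrite mulnC -[2]card_bool -cardsT -cardsX; apply: subset_leq_card.
apply/subsetP => _ /imsetP [[x y] + ->].
by rewrite !inE /= andbT => /andP [].
Qed.

Lemma regular_card_deg_le G x : regular G -> #|T| * deg G x <= 2 * #|G|.
Proof.
move=> regG; apply: leq_trans (sum_deg_le G).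
by rewrite (eq_bigr (fun=> deg G x)) ?sum_nat_const // => y _; apply: regG.
Qed.

Lemma dist_le_sym G x y r : dist_le G x y r -> dist_le G y x r.
Proof.
case=> p [Gp <- size_p]; exists (rev (belast x p)); split.
- by rewrite rev_path; apply: sub_path Gp => u v; rewrite adjC.
- by case: p {Gp size_p} => //= z p; rewrite rev_cons last_rcons.
- by rewrite size_rev size_belast.
Qed.

Definition nbhd G (B : {set T}) : {set T} := [set y | [exists z in B, adj G z y]].

Fixpoint ball G x i : {set T} :=
  if i is i'.+1 then ball G x i' :|: nbhd G (ball G x i') else [set x].

Lemma card_nbhd_le G B x : regular G -> #|nbhd G B| <= #|B| * deg G x.
Proof.
move=> regG; apply: (@leq_trans #|[set p : T * T | (p.1 \in B) && adj G p.1 p.2]|).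
  apply: leq_trans (leq_imset_card snd _); apply: subset_leq_card.
  apply/subsetP => y; rewrite inE => /exists_inP [z zB Gzy].
  by apply/imsetP; exists (z, y); rewrite // inE /= zB.
rewrite card_rel_pairs (eq_bigr (fun=> deg G x)) ?sum_nat_const // => z _.
exact: regG.
Qed.

Lemma card_ball_le G x i : regular G -> #|ball G x i| <= (deg G x).+1 ^ i.
Proof.
move=> regG; elim: i => [|i IHi] /=; first by rewrite cards1.
rewrite expnS mulSn; apply: leq_trans (leq_card_setU _ _) _.
apply: leq_add => //; apply: leq_trans (card_nbhd_le _ x regG) _.
by rewrite mulnC leq_mul2l IHi orbT.
Qed.

Lemma ball_sub G x : {homo ball G x : i j / i <= j >-> i \subset j}.
Proof.
apply: homo_leq => [B|B A C|i]; [exact: subxx | exact: subset_trans | exact: subsetUl].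
Qed.

Lemma mem_ball_path G x p : path (adj G) x p -> last x p \in ball G x (size p).
Proof.
elim/last_ind: p => [|p z IHp]; first by rewrite inE.
rewrite rcons_path last_rcons size_rcons => /andP [/IHp px Gz] /=.
by rewrite !inE; apply/orP; right; apply/exists_inP; exists (last x p).
Qed.

Lemma moore_bound G x r : regular G -> (forall y, dist_le G x y r) ->
  #|T| <= (deg G x).+1 ^ r.
Proof.
move=> regG xr; apply: leq_trans (card_ball_le x r regG).
apply: subset_leq_card; apply/subsetP => y _.
have [p [Gp <- size_p]] := xr y.
exact: subsetP (ball_sub G x size_p) _ (mem_ball_path Gp).
Qed.

End Graphs.

Section Saturation.
Variables V W : finType.
Variable F : {set {set V}}.
Implicit Type G : {set {set W}}.

Definition detour_le r := forall a b, adj F a b -> dist_le (F :\ [set a; b]) a b r.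

Lemma copy_through_new_edge G x y :
  ~ has_copy F G -> has_copy F (G :|: [set [set x; y]]) ->
  exists f a b, [/\ injective f, adj F a b, [set f a; f b] = [set x; y] &
    forall u v, adj (F :\ [set a; b]) u v -> adj G (f u) (f v)].
Proof.
move=> noFG [f [f_inj f_hom]].
have [[a b] /andP [/= Fab not_Gfab]] :
    exists p : V * V, adj F p.1 p.2 && ~~ adj G (f p.1) (f p.2).
  apply/existsP; apply: contraT => /existsPn noF; exfalso; apply: noFG.
  exists f; split=> // a b Fab.
  by move: (noF (a, b)); rewrite /= Fab negbK.
have Efab : [set f a; f b] = [set x; y].
  move: (f_hom a b Fab); rewrite /adj in_setU in_set1 => /andP [_ /orP [Gfab|/eqP //]].
  by move: not_Gfab; rewrite /adj Gfab (adj_neq (f_hom a b Fab)).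
exists f, a, b; split=> // u v; rewrite adjD1 => /andP [uv_ab Fuv].
move: (f_hom u v Fuv); rewrite /adj in_setU in_set1 => /andP [-> /orP [-> //|/eqP]].
rewrite -Efab => /eq_set2_cases [] [/f_inj eu /f_inj ev].
  by rewrite eu ev eqxx in uv_ab.
by rewrite eu ev setUC eqxx in uv_ab.
Qed.

Lemma saturated_dist_le G r : 0 < r -> detour_le r -> saturated F G ->
  forall x y, dist_le G x y r.
Proof.
move=> r_gt0 detF [_ noFG satG] x y.
have [<-|xy] := eqVneq x y; first by exists [::].
have [Gxy|nGxy] := boolP (adj G x y); first by exists [:: y]; rewrite /= Gxy.
have [f [a [b [_ Fab Efab f_hom]]]] := copy_through_new_edge noFG (satG x y xy nGxy).
have [p [Fp last_p size_p]] := detF a b Fab.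
have fab : dist_le G (f a) (f b) r.
  by exists (map f p); rewrite last_map last_p size_map; split=> //; apply: homo_path Fp.
by case/eq_set2_cases: Efab => [[<- <-] | [<- <-]] //; apply: dist_le_sym.
Qed.

Lemma saturated_regular_bounds G r : 0 < r -> detour_le r -> regular G ->
  saturated F G -> exists d, #|W| <= d.+1 ^ r /\ #|W| * d <= 2 * #|G|.
Proof.
move=> r_gt0 detF regG satG; have [x _|W0] := pickP W; last first.
  by exists 0; rewrite (eq_card0 W0).
exists (deg G x); split; last exact: regular_card_deg_le.
by apply: moore_bound => //; apply: saturated_dist_le.
Qed.

End Saturation.

Section Detours.
Variable T : finType.
Implicit Types (G : {set {set T}}) (x y : T).

Lemma dist_le_leq G x y r r' : r <= r' -> dist_le G x y r -> dist_le G x y r'.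
Proof. by move=> rr' [p [Gp last_p size_p]]; exists p; split=> //; apply: leq_trans rr'. Qed.

Lemma connect_dist_le G x y : connect (adj G) x y -> dist_le G x y #|T|.
Proof.
case/connectP=> p /shortenP [p' Gp' Up' _] ->; exists p'; split=> //.
by have := max_card (mem (x :: p')); rewrite (card_uniqP Up') => /ltnW.
Qed.

Lemma adjD1_avoid G x y u v : adj G u v -> u != x -> v != x ->
  adj (G :\ [set x; y]) u v.
Proof.
move=> Guv ux vx; rewrite adjD1 Guv andbT; apply: contraNneq ux => E.
by have := set21 x y; rewrite -E !inE (eq_sym x v) (negbTE vx) orbF => /eqP->.
Qed.

Lemma cycle_detour G c x : uniq c -> cycle (adj G) c -> 2 < size c -> x \in c ->
  dist_le (G :\ [set x; next c x]) (next c x) x (size c).-1.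
Proof.
move=> Uc Gc c_gt2 /rot_to [i p Ec].
rewrite -(next_rot i Uc) -(size_rot i) Ec.
rewrite -(rot_uniq i) Ec in Uc; rewrite -(rot_cycle i) Ec in Gc.
rewrite -(size_rot i) Ec in c_gt2.
case: p {Ec} => [|y [|w q]] in Uc Gc c_gt2 * => //.
rewrite /= eqxx; move: Uc => /= /and3P [x_yq y_q _].
have : path (adj G) y (rcons (w :: q) x) by case/andP: Gc.
rewrite rcons_path => /andP [Gq Glast].
have xNwq : x \notin w :: q by apply: contraNN x_yq => xwq; rewrite inE xwq orbT.
exists (rcons (w :: q) x); rewrite last_rcons size_rcons rcons_path; split=> //.
apply/andP; split.
  apply: (sub_in_path (P := [pred z | z != x]) _ _ Gq) => [u v ux vx Guv|].
    exact: adjD1_avoid.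
  by apply/allP => z z_yq; apply: contraNneq x_yq => <-.
rewrite adjD1 Glast andbT; apply/negP => /eqP /eq_set2_cases [] [/= Elast _].
  by move: xNwq; rewrite -Elast mem_last.
by move: y_q; rewrite -Elast mem_last.
Qed.

End Detours.

Section CutEdge.
Variables (T : finType) (G : {set {set T}}) (a b : T).
Hypothesis Gab : adj G a b.
Local Notation G' := (G :\ [set a; b]).

Let sym_adj (H : {set {set T}}) : connect_sym (adj H).
Proof. by apply: sym_connect_sym => x y; rewrite adjC. Qed.

Let connect_del_edge : subrel (connect (adj G')) (connect (adj G)).
Proof. by apply: connect_sub => x y; rewrite adjD1 => /andP [_ /connect1]. Qed.

Let ncompE (H : {set {set T}}) : ncomp H = #|[set x | roots (adj H) x]|.
Proof. by apply: eq_card => x; rewrite !inE andbT. Qed.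

Let roots_del_edge :
  [set x | roots (adj G) x] = root (adj G) @: [set x | roots (adj G') x].
Proof.
apply/setP => z; rewrite inE; apply/idP/imsetP => [/eqP rz | [x _ ->]].
  exists (root (adj G') z); first by rewrite inE roots_root.
  by rewrite -{1}rz; apply/rootP => //; apply/connect_del_edge/connect_root.
exact: roots_root.
Qed.

Lemma cut_edge_set2P : cut_edge G [set a; b] <-> ~~ connect (adj G') a b.
Proof.
have Ge : [set a; b] \in G by case/andP: Gab.
rewrite /cut_edge !ncompE roots_del_edge; split=> [[_] | nab].
  apply: contraTN => ab; rewrite -leqNgt card_in_imset // => x y.
  rewrite !inE => /eqP rx /eqP ry /rootP -/(_ (sym_adj G)) xy.
  rewrite -rx -ry; apply/rootP => //; apply: connect_sub xy => u v Guv.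
  have [/eq_set2_cases [] [-> ->] |ne] := eqVneq [set u; v] [set a; b].
  - exact: ab.
  - by rewrite sym_adj.
  by apply: connect1; rewrite adjD1 ne.
split=> //; rewrite ltn_neqAle leq_imset_card andbT.
apply: contra nab => /imset_injP inj_root; apply/rootP => //.
apply: inj_root; rewrite ?inE ?roots_root //.
by rewrite -!(rootP (sym_adj G) (connect_del_edge (connect_root _ _))); apply/rootP/connect1.
Qed.

End CutEdge.

Section DetourConditions.
Variables (V : finType) (F : {set {set V}}).

Lemma short_cycles_detour_le m :
  (forall e, e \in F -> edge_in_short_cycle F e m.+1) -> detour_le F m.
Proof.
move=> short_cycles a b /[dup] Fab /andP [_ /short_cycles [c [Uc Fc c_gt2 c_le [x xc Eab]]]].
have xnext : dist_le (F :\ [set x; next c x]) (next c x) x m.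
  by apply: dist_le_leq _ (cycle_detour Uc Fc c_gt2 xc); rewrite -subn1 leq_subLR add1n.
by rewrite Eab; case/eq_set2_cases: Eab => [] [-> ->]; first apply: dist_le_sym.
Qed.

Lemma no_cut_edge_detour_le : ~ (exists e, cut_edge F e) -> detour_le F #|V|.
Proof.
move=> no_cut a b Fab; apply: connect_dist_le; apply: contraT => nab; exfalso.
by apply: no_cut; exists [set a; b]; apply/cut_edge_set2P.
Qed.

End DetourConditions.

Lemma exists_inj_in (V W : finType) (S : {set V}) (B : {set W}) a b :
  a \in S -> b \in B -> #|S| <= #|B| ->
  exists g : V -> W, [/\ {in S &, injective g}, {in S, forall w, g w \in B} & g a = b].
Proof.
move=> aS bB leSB; pose g0 w := nth b (enum B) (index w (enum S)).
have idx_lt w : w \in S -> index w (enum S) < size (enum B).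
  by move=> wS; rewrite -cardE (leq_trans _ leSB) // cardE index_mem mem_enum.
have g0B w : w \in S -> g0 w \in B by move=> wS; rewrite -mem_enum mem_nth ?idx_lt.
exists (tperm (g0 a) b \o g0); split=> [u w uS wS /perm_inj | w wS /= | ]; last exact: tpermL.
  rewrite /g0 => /eqP; rewrite nth_uniq ?enum_uniq ?idx_lt // => /eqP.
  by apply: index_inj; rewrite ?mem_enum.
by case: tpermP => // *; apply: g0B.
Qed.

Section CliqueUnion.
Variables s t : nat.
Hypothesis s_gt0 : 0 < s.
Local Notation n := (t * s).

Definition same_block (i j : 'I_n) := i %/ s == j %/ s.

Definition clique_union : {set {set 'I_n}} :=
  [set [set p.1; p.2] | p in [set p : 'I_n * 'I_n | (p.1 != p.2) && same_block p.1 p.2]].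

Lemma adj_clique_union i j : adj clique_union i j = (i != j) && same_block i j.
Proof.
rewrite /adj /same_block; apply/andP/andP => [[ij /imsetP [[u v]]] | [ij bij]].
  rewrite inE /same_block /= => /andP [uv /eqP buv] /eq_set2_cases [] [-> ->].
    by rewrite buv.
  by rewrite eq_sym buv.
by split=> //; apply/imsetP; exists (i, j); rewrite // inE /same_block ij bij.
Qed.

Lemma card_block (i : 'I_n) : #|[set j | same_block j i]| = s.
Proof.
have lt_n (l : 'I_s) : i %/ s * s + l < n.
  apply: (@leq_trans (i %/ s * s + s)); first by rewrite ltn_add2l.
  by rewrite -mulSnr leq_mul2r ltn_divLR // ltn_ord orbT.
pose h (l : 'I_s) := Ordinal (lt_n l).
have h_inj : injective h by move=> l l' /(congr1 val) /addnI /val_inj.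
rewrite -[RHS]card_ord -cardsT -(card_imset _ h_inj).
apply: eq_card => j; rewrite inE /same_block; apply/eqP/imsetP => [Ej | [l _ ->]]; last first.
  by rewrite /h /= divnMDl // (divn_small (ltn_ord l)) addn0.
by exists (Ordinal (ltn_pmod j s_gt0)); rewrite //; apply: val_inj; rewrite /= -Ej -divn_eq.
Qed.

Lemma deg_clique_union i : deg clique_union i = s.-1.
Proof.
have := card_block i; rewrite (cardsD1 i) inE /same_block eqxx add1n => Es.
rewrite -[in RHS]Es /=; apply: eq_card => j.
by rewrite !inE adj_clique_union /same_block eq_sym [_ %/ s == _]eq_sym.
Qed.

Lemma clique_union_regular : regular clique_union.
Proof. by move=> i j; rewrite !deg_clique_union. Qed.

Lemma card_clique_union_le : #|clique_union| <= n * s.-1.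
Proof.
apply: leq_trans (leq_imset_card _ _) _.
rewrite -[X in X <= _]/#|[set p : 'I_n * 'I_n | predT p.1 && ((p.1 != p.2) && same_block p.1 p.2)]|.
rewrite (card_rel_pairs predT (fun i j : 'I_n => (i != j) && same_block i j)).
rewrite (eq_bigr (fun=> s.-1)) => [|i _]; first by rewrite sum_nat_const card_ord.
by rewrite -(deg_clique_union i); apply: eq_card => j; rewrite !inE adj_clique_union.
Qed.

Lemma clique_union_sgraph : is_sgraph clique_union.
Proof. by move=> e /imsetP [[i j]]; rewrite inE => /andP [ij _] ->; rewrite cards2 ij. Qed.

End CliqueUnion.

Section CliqueUnionSaturated.
Variables (V : finType) (F : {set {set V}}) (s t : nat) (a b : V).
Hypotheses (s_gt0 : 0 < s) (card_V : #|V| = s.+1) (connF : connected F).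
Hypothesis (cut_ab : ~~ connect (adj (F :\ [set a; b])) a b).
Local Notation G := (clique_union s t).

Lemma clique_union_no_copy : ~ has_copy F G.
Proof.
case=> f [f_inj f_hom].
have closed_block : closed (adj F) [pred w | same_block (f w) (f a)].
  by move=> x y /f_hom; rewrite adj_clique_union !inE /same_block => /andP [_ /eqP ->].
have : f @: [set: V] \subset [set j | same_block j (f a)].
  apply/subsetP => _ /imsetP [w _ ->]; rewrite inE.
  by move: (closed_connect closed_block (connF a w)); rewrite !inE /same_block eqxx => <-.
by move/subset_leq_card; rewrite card_block // card_imset // cardsT card_V ltnn.
Qed.

Let A := [set w | connect (adj (F :\ [set a; b])) a w].

Let a_A : a \in A. Proof. by rewrite inE connect0. Qed.

Let b_notA : b \notin A. Proof. by rewrite inE. Qed.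

Let edge_out_of_A u v : u \in A -> v \notin A -> adj F u v -> u = a /\ v = b.
Proof.
move=> uA vNA Fuv; have [/eq_set2_cases [] [Eu Ev] //|uv_ab] := eqVneq [set u; v] [set a; b].
  by rewrite Ev a_A in vNA.
case/negP: vNA; move: uA; rewrite !inE => /connect_trans; apply.
by apply: connect1; rewrite adjD1 uv_ab.
Qed.

Let card_missing_le (S : {set V}) x : x \notin S -> #|S| <= s.
Proof.
move=> xNS; have <- : #|[set~ x]| = s by rewrite cardsC1 card_V.
by apply/subset_leq_card/subsetP => y yS; rewrite !inE; apply: contraNneq xNS => <-.
Qed.

Lemma clique_union_saturated : saturated F G.
Proof.
split; [exact: clique_union_sgraph | exact: clique_union_no_copy |].
move=> x y xy; rewrite adj_clique_union xy /same_block /= => xy_blocks.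
pose block (z : 'I_(t * s)) := [set j | same_block j z].
have block_self z : z \in block z by rewrite inE /same_block.
have A_le : #|A| <= #|block x| by rewrite card_block //; apply: card_missing_le b_notA.
have CA_le : #|~: A| <= #|block y|.
  by rewrite card_block //; apply: (card_missing_le (x := a)); rewrite inE a_A.
have b_CA : b \in ~: A by rewrite inE b_notA.
have [gA [gA_inj gA_block gA_a]] := exists_inj_in a_A (block_self x) A_le.
have [gB [gB_inj gB_block gB_b]] := exists_inj_in b_CA (block_self y) CA_le.
pose f w := if w \in A then gA w else gB w.
have blocks_f w : f w %/ s = (if w \in A then x else y) %/ s.
  rewrite /f; case: ifP => wA; apply/eqP.
    by have := gA_block w wA; rewrite inE.
  by have := gB_block w; rewrite in_setC wA inE => /(_ isT).
have f_inj : injective f.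
  move=> u w Efuw; have := blocks_f w; rewrite -Efuw blocks_f; move: Efuw.
  rewrite /f; case: ifPn => uA; case: ifPn => wA.
  - by move=> E _; apply: gA_inj E.
  - by move=> _ /eqP; rewrite (negbTE xy_blocks).
  - by move=> _ /eqP; rewrite eq_sym (negbTE xy_blocks).
  by move=> E _; apply: gB_inj E; rewrite in_setC.
have f_a : f a = x by rewrite /f a_A.
have f_b : f b = y by rewrite /f (negbTE b_notA).
have Gxy : adj (G :|: [set [set x; y]]) x y by rewrite /adj xy in_setU set11 orbT.
exists f; split=> // u v Fuv.
have same_side : (u \in A) = (v \in A) -> adj (G :|: [set [set x; y]]) (f u) (f v).
  move=> Euv; apply: adjU.
  by rewrite adj_clique_union /same_block (inj_eq f_inj) (adj_neq Fuv) !blocks_f Euv eqxx.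
have [uA | uNA] := boolP (u \in A); have [vA | vNA] := boolP (v \in A).
- by apply: same_side; rewrite uA vA.
- by have [-> ->] := edge_out_of_A uA vNA Fuv; rewrite f_a f_b.
- by have [-> ->] := edge_out_of_A vA uNA (etrans (adjC _ _ _) Fuv); rewrite f_a f_b adjC.
by apply: same_side; rewrite (negbTE uNA) (negbTE vNA).
Qed.

End CliqueUnionSaturated.

Section RealBounds.
Local Open Scope R_scope.

Lemma INR_expn (m r : nat) : INR (m ^ r) = INR m ^ r.
Proof. by elim: r => [//|r IHr]; rewrite expnS mult_INR IHr. Qed.

Lemma Rpower_pow_inv (x : R) (r : nat) : 0 < x -> (0 < r)%N -> Rpower (x ^ r) (/ INR r) = x.
Proof.
move=> x_gt0 r_gt0; have r_neq0 : INR r <> 0 by apply: not_0_INR; case: r r_gt0.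
by rewrite -Rpower_pow // Rpower_mult Rinv_r // Rpower_1.
Qed.

Lemma moore_rpower_le (n d k r : nat) : (0 < r)%N -> (2 ^ r <= n)%N ->
  (n <= d.+1 ^ r)%N -> (n * d <= 2 * k)%N -> / 4 * Rpower (INR n) (1 + / INR r) <= INR k.
Proof.
move=> r_gt0 n_ge n_le nd_le.
have n_gt0 : (0 < n)%N by apply: leq_trans n_ge; rewrite expn_gt0.
have root_mono (a b : nat) : (0 < a)%N -> (a <= b)%N ->
    Rpower (INR a) (/ INR r) <= Rpower (INR b) (/ INR r).
  move=> a_gt0 ab; apply: Rle_Rpower_l; first by apply/Rlt_le/Rinv_0_lt_compat/lt_0_INR/ltP.
  by split; [apply/lt_0_INR/ltP | apply/le_INR/leP].
have root_expn (b : nat) : (0 < b)%N -> Rpower (INR (b ^ r)) (/ INR r) = INR b.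
  by move=> b_gt0; rewrite INR_expn Rpower_pow_inv //; apply/lt_0_INR/ltP.
set z := Rpower (INR n) (/ INR r).
have z_ge2 : INR 2 <= z by rewrite -root_expn //; apply: root_mono; rewrite ?expn_gt0.
have z_le : z <= INR d.+1 by rewrite -root_expn //; apply: root_mono.
have nd_leR : INR n * INR d <= INR 2 * INR k by rewrite -!mult_INR; apply/le_INR/leP.
have nz_le : INR n * (z / 2) <= INR n * INR d.
  by apply: Rmult_le_compat_l; [apply: pos_INR | rewrite S_INR /= in z_le z_ge2; lra].
rewrite Rpower_plus Rpower_1 -/z; last by apply/lt_0_INR/ltP.
rewrite /= in nd_leR; lra.
Qed.

Lemma ratio_ge_half (n d k : nat) : (0 < n)%N -> (n * d <= 2 * k)%N ->
  INR d / 2 <= INR k / INR n.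
Proof.
move=> n_gt0 nd_le; have n_gtR : 0 < INR n by apply/lt_0_INR/ltP.
have : INR n * INR d <= INR 2 * INR k by rewrite -!mult_INR; apply/le_INR/leP.
rewrite /= => ndR; apply: (Rmult_le_reg_r (2 * INR n)); first lra.
by field_simplify; lra.
Qed.

Lemma ratio_le (n k m : nat) : (0 < n)%N -> (k <= n * m)%N -> INR k / INR n <= INR m.
Proof.
move=> n_gt0 k_le; have n_gtR : 0 < INR n by apply/lt_0_INR/ltP.
have : INR k <= INR n * INR m by rewrite -mult_INR; apply/le_INR/leP.
by move=> kR; apply: (Rmult_le_reg_r (INR n)) => //; field_simplify; lra.
Qed.

End RealBounds.

Section RegularSaturationNumber.
Variables (V : finType) (F : {set {set V}}).

Lemma is_rsat_exists n (G : {set {set 'I_n}}) : regular G -> saturated F G ->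
  exists2 k, is_rsat F n k & k <= #|G|.
Proof.
move=> regG satG.
pose P k := exists G' : {set {set 'I_n}}, [/\ regular G', saturated F G' & #|G'| = k].
have [k [[[G' PG'] min_k] _]] :
    has_unique_least_element Peano.le P.
  by apply: dec_inh_nat_subset_has_unique_least_element => [k|]; [apply: classic | exists #|G|, G].
exists k; last by apply/leP/min_k; exists G.
by split=> [|G'' regG'' satG'']; [exists G' | apply/leP/min_k; exists G''].
Qed.

Lemma is_rsat_deg_bounds r n k : 0 < r -> detour_le F r -> is_rsat F n k ->
  exists d, n <= d.+1 ^ r /\ n * d <= 2 * k.
Proof.
move=> r_gt0 detF [[G [regG satG <-]] _].
by have := saturated_regular_bounds r_gt0 detF regG satG; rewrite card_ord.
Qed.

Lemma rsat_Omega_of_detour r : 0 < r -> detour_le F r ->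
  rsat_Omega F (fun n => Rpower (INR n) (Rplus 1 (Rinv (INR r)))).
Proof.
move=> r_gt0 detF; exists (Rinv 4); split; first lra.
exists (2 ^ r) => n k n_ge /(is_rsat_deg_bounds r_gt0 detF) [d [n_le nd_le]].
exact: moore_rpower_le r_gt0 n_ge n_le nd_le.
Qed.

Lemma not_rsat_liminf_le_of_detour r c : detour_le F r -> ~ rsat_liminf_le F c.
Proof.
move=> detF liminf_c.
have detF' : detour_le F r.+1 by move=> a b /detF; apply: dist_le_leq.
have [M M_gt] := INR_unbounded (2 * (c + 1)).
have [n [k [n_ge rsat_k ratio_lt]]] := liminf_c _ Rlt_0_1 (M.+1 ^ r.+1).+1.
have [d [n_le nd_le]] := is_rsat_deg_bounds (ltn0Sn r) detF' rsat_k.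
have M_lt_d : M < d.
  by rewrite ltnNge; apply: contraTN n_ge => dM; rewrite -leqNgt (leq_trans n_le) // leq_exp2r.
have := ratio_ge_half (leq_trans (ltn0Sn _) n_ge) nd_le.
have /lt_INR : (M < d)%coq_nat by apply/ltP.
lra.
Qed.

Lemma rsat_liminf_le_of_cut_edge e : is_sgraph F -> connected F -> cut_edge F e ->
  rsat_liminf_le F (INR #|V|).
Proof.
move=> sgF connF cut_e eps eps_gt0 N.
have /cards2P [a [b [ab Ee]]] : #|e| == 2 by rewrite sgF //; case: cut_e.
subst e; have Fab : adj F a b by rewrite /adj ab; case: cut_e.
have card_V : #|V| = #|V|.-1.+1 by rewrite prednK // (cardD1 a).
have s_gt0 : 0 < #|V|.-1.
  by rewrite -ltnS -card_V (cardD1 a) (cardD1 b) !inE eq_sym ab.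
have satG := clique_union_saturated N.+1 s_gt0 card_V connF ((cut_edge_set2P Fab).1 cut_e).
have [k rsat_k k_le] := is_rsat_exists (clique_union_regular s_gt0) satG.
exists (N.+1 * #|V|.-1), k; split=> //; first by rewrite (leq_trans (leqnSn N)) ?leq_pmulr.
apply: (@Rle_lt_trans _ (INR #|V|.-1)); last by have := le_INR _ _ (leP (leq_pred #|V|)); lra.
apply: ratio_le; first by rewrite muln_gt0.
by rewrite (leq_trans k_le) // (leq_trans (card_clique_union_le _ s_gt0)) // leq_mul2l leq_pred orbT.
Qed.

End RegularSaturationNumber.

Theorem proposition1p2 (V : finType) (F : {set {set V}}) :
  is_sgraph F ->
  (forall m : nat, 1 <= m ->
     (forall e, e \in F -> edge_in_short_cycle F e m.+1) ->
     rsat_Omega F (fun n => Rpower (INR n) (Rplus 1 (Rinv (INR m))))) /\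
  (forall r : nat, 1 <= r ->
     (forall e, e \in F -> diam_le (F :\ e) r) ->
     rsat_Omega F (fun n => Rpower (INR n) (Rplus 1 (Rinv (INR r))))) /\
  (connected F ->
     ((exists c : R, rsat_liminf_le F c) <-> (exists e, cut_edge F e))).
Proof.
move=> sgF; split; last split.
- by move=> m m_gt0 /short_cycles_detour_le; apply: rsat_Omega_of_detour.
- move=> r r_gt0 diamF; apply: rsat_Omega_of_detour r_gt0 _ => a b Fab.
  by apply: diamF; case/andP: Fab.
move=> connF; split=> [[c liminf_c] | [e cut_e]].
  apply: NNPP => /no_cut_edge_detour_le detF.
  exact: not_rsat_liminf_le_of_detour detF liminf_c.
by exists (INR #|V|); apply: rsat_liminf_le_of_cut_edge cut_e.
Qed.
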